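(* (1) Let $\mathcal C$ and $\mathcal D$ be connected $\Delta$-complexes labeled over a common $B(X,P)$ and let $f\colon\mathcal D\to\mathcal C$ be an immersion commuting with the labelings. If $v\in\mathcal D^{(0)}$ and $u=f(v)$, then $L(\mathcal D,v)\subseteq L(\mathcal C,u)$, and $L(\mathcal D,v)$ is a closed inverse submonoid of $L(\mathcal C,u)$. (2) Conversely, let $\mathcal C$ be a connected $\Delta$-complex labeled over $B(X,P)$, let $u\in\mathcal C^{(0)}$ and let $H$ be a closed inverse submonoid of $M(X,P)$ with $H\subseteq L(\mathcal C,u)$. Then there exist a connected $\Delta$-complex $\mathcal D_H$ labeled over $B(X,P)$, an immersion $f_H\colon\mathcal D_H\to\mathcal C$ commuting with the labelings, and a $0$-cell $v\in\mathcal D_H$ with $f_H(v)=u$ and $L(\mathcal D_H,v)=H$; moreover $(\mathcal D_H,f_H,v)$ is unique up to isomorphism (a label-preserving cellular homeomorphism commuting with characteristic maps, with the immersions and preserving the base vertex). (3) If $H,K$ are closed inverse submonoids of $M(X,P)$ with $H,K\subseteq L(\mathcal C,u)$, then there is a homeomorphism $h\colon\mathcal D_H\to\mathcal D_K$ carrying cells to cells, commuting with the distinguished characteristic maps and with $f_K\circ h=f_H$ (not required to preserve base vertices) if and only if $H$ and $K$ are conjugate in $L(\mathcal C,u)$.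
   Context: A $\Delta$-complex is a CW-complex in which each $k$-cell $c$ has a distinguished characteristic map $\sigma_c\colon\Delta^k\to\mathcal C$, $\Delta^k=[v_0,\dots,v_k]$ the standard simplex with ordered vertices, such that the restriction of $\sigma_c$ to each $(k-1)$-face (identified order-preservingly with $\Delta^{k-1}$) is the distinguished characteristic map of a $(k-1)$-cell. The root of $c$ is $\sigma_c(v_0)$; a $1$-cell $e$ is directed from $\sigma_e(v_0)$ to $\sigma_e(v_1)$. All complexes are finite-dimensional; $\mathcal C^{(0)}$ denotes the set of $0$-cells. An immersion is a continuous map $f$ that is a local homeomorphism onto its image and commutes with characteristic maps: each $k$-cell $d$ maps onto a $k$-cell and $f\circ\sigma_d=\sigma_{f(d)}$. $B(X,P)$ is a $\Delta$-complex with one $0$-cell, $1$-cells indexed by $X$, $k$-cells ($2\le k\le n$) indexed by $P_k$, index sets pairwise disjoint, $P=\bigcup P_k$. A complex $\mathcal C$ is labeled over $B(X,P)$ via an immersion $f_{\mathcal C}\colon\mathcal C\to B(X,P)$, and $\ell(c)$ is the index of $f_{\mathcal C}(c)$; an immersion $g\colon\mathcal D\to\mathcal C$ commutes with the labelings if $f_{\mathcal C}\circ g=f_{\mathcal D}$. Boundary labels: for a $k$-cell $c$ ($k\ge2$) with characteristic map $\sigma$, let $c_i$ be the $(k-1)$-cell whose characteristic map is $\sigma$ restricted to the face omitting $v_i$, and $e(c)=\sigma([v_0,v_1])$; $bl(c)=\ell(\sigma[v_0,v_1])\ell(\sigma[v_1,v_2])\ell(\sigma[v_0,v_2])^{-1}$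 if $k=2$, $bl(c)=\ell(c_k)\cdots\ell(c_1)\ell(e(c))\ell(c_0)\ell(e(c))^{-1}$ if $k\ge3$; $bl(\rho)$ is the boundary label of the cell of $B(X,P)$ labeled $\rho$. $M(X,P)$ is the inverse monoid presented by generators $X\cup P$ and relations $\rho^2=\rho$, $\rho=\rho\,bl(\rho)$ for $\rho\in P$. $M(X,P)$ acts on the right by partial injections on $\mathcal C^{(0)}$: $v\cdot x=w$ iff there is a $1$-cell labeled $x\in X$ from $v$ to $w$; $v\cdot x^{-1}=w$ iff there is one from $w$ to $v$; $v\cdot\rho=v$ iff $v$ is the root of a cell labeled $\rho\in P$ (undefined otherwise); this extends to a well-defined action of $M(X,P)$. The loop monoid is $L(\mathcal C,v)=\{m\in M(X,P): v\cdot m=v\}$. Natural partial order: $a\le b$ iff $a=eb$ for an idempotent $e$. For $N\subseteq M$, $N^\omega=\{m: m\ge n\text{ for some }n\in N\}$; $N$ is closed if $N=N^\omega$. Two closed inverse submonoids $H,K$ are conjugate in $L$ if there is $m\in L$ with $mHm^{-1}\subseteq K$ and $m^{-1}Km\subseteq H$. *)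

(* Combinatorial (semi-simplicial)
   rendering of labeled Delta-complexes, immersions and the inverse monoid
   M(X,P) presented by generators and relations (as a congruence on words). *)
From mathcomp Require Import all_boot.
Set Implicit Arguments.
Unset Strict Implicit.
Unset Printing Implicit Defensive.

(* cell k = the k-cells;  face c i = the (k-1)-cell whose characteristic *)
(* map is the restriction of sigma_c to the face omitting v_i          *)
(* (only indices i <= k are meaningful).                               *)
Record DeltaComplex : Type := {
  cell : nat -> Type;
  face : forall k : nat, cell k.+1 -> nat -> cell k;
  face_face : forall (k : nat) (c : cell k.+2) (i j : nat),
      i < j -> j <= k.+2 ->
      face (face c j) i = face (face c i) j.-1
}.
Arguments face {d k} c i.

(* vertex number i of a k-cell, i.e. sigma_c(v_i) *)
Fixpoint vert (D : DeltaComplex) (k : nat) : cell D k -> nat -> cell D 0 :=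
  match k return cell D k -> nat -> cell D 0 with
  | 0 => fun c _ => c
  | k'.+1 => fun c i =>
      if i < k'.+1 then @vert D k' (face c k'.+1) i
      else @vert D k' (face c 0) i.-1
  end.

Definition root (D : DeltaComplex) (k : nat) (c : cell D k) : cell D 0 :=
  vert c 0.

(* a 1-cell e is directed from sigma_e(v_0) to sigma_e(v_1) *)
Definition src (D : DeltaComplex) (e : cell D 1) : cell D 0 := face e 1.
Definition tgt (D : DeltaComplex) (e : cell D 1) : cell D 0 := face e 0.

(* the edge sigma_c([v_0,v_1]) of a (m+1)-cell *)
Fixpoint front (D : DeltaComplex) (m : nat) : cell D m.+1 -> cell D 1 :=
  match m return cell D m.+1 -> cell D 1 with
  | 0 => fun c => c
  | m'.+1 => fun c => @front D m' (face c m'.+2)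
  end.

Definition is_morphism (D E : DeltaComplex)
    (f : forall k, cell D k -> cell E k) : Prop :=
  forall (k : nat) (c : cell D k.+1) (i : nat), i <= k.+1 ->
    f k (face c i) = face (f k.+1 c) i.

(* immersion: a morphism which is a local homeomorphism onto its image,
   i.e. injective on the corners at each vertex *)
Definition is_immersion (D E : DeltaComplex)
    (f : forall k, cell D k -> cell E k) : Prop :=
  is_morphism f /\
  forall (k : nat) (d d' : cell D k) (i : nat), i <= k ->
    vert d i = vert d' i -> f k d = f k d' -> d = d'.

Definition is_iso (D E : DeltaComplex)
    (h : forall k, cell D k -> cell E k) : Prop :=
  is_morphism h /\
  exists g : forall k, cell E k -> cell D k,
    is_morphism g /\ (forall k x, g k (h k x) = x) /\ (forall k y, h k (g k y) = y).

(* connectedness (of the 1-skeleton, equivalently of the complex) *)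
Inductive vconn (D : DeltaComplex) : cell D 0 -> cell D 0 -> Prop :=
| vc_refl x : vconn x x
| vc_edge (e : cell D 1) : vconn (src e) (tgt e)
| vc_sym x y : vconn x y -> vconn y x
| vc_trans x y z : vconn x y -> vconn y z -> vconn x z.

Definition connected (D : DeltaComplex) : Prop :=
  forall x y : cell D 0, vconn x y.

(* X = cell B 1, P_k = cell B k (k >= 2).                              *)
Definition single_vertex (B : DeltaComplex) : Prop :=
  exists b0 : cell B 0, forall b : cell B 0, b = b0.

Definition finite_dim (B : DeltaComplex) : Prop :=
  exists n : nat, forall k : nat, n < k -> cell B k -> False.

(* generators X u P : (j, c) with c a (j+1)-cell of B;
   j = 0 : c in X,  j >= 1 : c in P_{j+1} *)
Definition Gen (B : DeltaComplex) : Type := {j : nat & cell B j.+1}.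
(* a letter: a generator together with a flag "inverted" *)
Definition letter (B : DeltaComplex) : Type := (Gen B * bool)%type.
Definition word (B : DeltaComplex) : Type := seq (letter B).

Definition gpos (B : DeltaComplex) (j : nat) (c : cell B j.+1) : letter B :=
  (existT (fun j => cell B j.+1) j c, false).
Arguments gpos {B} j c.
Definition gneg (B : DeltaComplex) (j : nat) (c : cell B j.+1) : letter B :=
  (existT (fun j => cell B j.+1) j c, true).

Arguments gneg {B} j c.
Definition inv_word (A : Type) (w : seq (A * bool)) : seq (A * bool) :=
  rev (map (fun l => (l.1, ~~ l.2)) w).

(* boundary label of the cell of B labeled by a generator *)
Definition bl_gen (B : DeltaComplex) (j : nat) : cell B j.+1 -> word B :=
  match j return cell B j.+1 -> word B with
  | 0 => fun _ => [::]
  | 1 => fun c =>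
      [:: gpos 0 (face c 2); gpos 0 (face c 0); gneg 0 (face c 1)]
  | (m.+2)%N => fun c =>
      [seq gpos m.+1 (face c i) | i <- rev (iota 1 m.+3)] ++
      [:: gpos 0 (front c); gpos m.+1 (face c 0); gneg 0 (front c)]
  end.

(* congruence on words generated by a relation R and the Vagner relations:
   the words modulo icong R form the inverse monoid Inv< A | R > *)
Inductive icong (A : Type) (R : seq (A * bool) -> seq (A * bool) -> Prop)
  : seq (A * bool) -> seq (A * bool) -> Prop :=
| ic_rel u v : R u v -> icong R u v
| ic_refl u : icong R u u
| ic_sym u v : icong R u v -> icong R v u
| ic_trans u v w : icong R u v -> icong R v w -> icong R u w
| ic_ctx l r u v : icong R u v -> icong R (l ++ u ++ r) (l ++ v ++ r)
| ic_vagner1 u : icong R (u ++ inv_word u ++ u) u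
| ic_vagner2 u v :
    icong R (u ++ inv_word u ++ v ++ inv_word v) (v ++ inv_word v ++ u ++ inv_word u).

Definition Brel (B : DeltaComplex) (u v : word B) : Prop :=
  exists (j : nat) (c : cell B j.+2),
    (u = [:: gpos j.+1 c; gpos j.+1 c] /\ v = [:: gpos j.+1 c]) \/
    (u = [:: gpos j.+1 c] /\ v = gpos j.+1 c :: bl_gen c).

Definition Meq (B : DeltaComplex) : word B -> word B -> Prop := icong (@Brel B).

(* subsets of M(X,P) are represented by predicates on words *)
Definition inv_submonoid (B : DeltaComplex) (H : word B -> Prop) : Prop :=
  (forall u v, Meq u v -> H u -> H v) /\
  H [::] /\
  (forall u v, H u -> H v -> H (u ++ v)) /\
  (forall u, H u -> H (inv_word u)).

Definition Mle (B : DeltaComplex) (a b : word B) : Prop :=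
  exists e : word B, Meq (e ++ e) e /\ Meq a (e ++ b).

(* H is closed inside L : H^omega (computed in L) = H *)
Definition closed_in (B : DeltaComplex) (L H : word B -> Prop) : Prop :=
  forall a b, H a -> L b -> Mle a b -> H b.

Definition closed_inv_submonoid_of (B : DeltaComplex) (L H : word B -> Prop)
  : Prop := inv_submonoid H /\ (forall w, H w -> L w) /\ closed_in L H.

Definition closed_inv_submonoid (B : DeltaComplex) (H : word B -> Prop)
  : Prop := inv_submonoid H /\ closed_in (fun _ => True) H.

Definition subset_w (B : DeltaComplex) (H K : word B -> Prop) : Prop :=
  forall w, H w -> K w.

Definition conjugate_in (B : DeltaComplex) (L H K : word B -> Prop) : Prop :=
  exists m : word B, L m /\
    (forall h, H h -> K (m ++ h ++ inv_word m)) /\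
    (forall k, K k -> H (inv_word m ++ k ++ m)).

Definition act (B C : DeltaComplex) (fC : forall k, cell C k -> cell B k)
    (v : cell C 0) (l : letter B) (w : cell C 0) : Prop :=
  match l with
  | (existT j r, b) =>
    (match j return cell B j.+1 -> Prop with
     | 0 => fun a => exists e : cell C 1, fC 1 e = a /\
              (if b then src e = w /\ tgt e = v else src e = v /\ tgt e = w)
     | m.+1 => fun rho => w = v /\
              exists c : cell C m.+2, fC m.+2 c = rho /\ root c = v
     end) r
  end.

Fixpoint actw (B C : DeltaComplex) (fC : forall k, cell C k -> cell B k)
    (v : cell C 0) (w : word B) (u : cell C 0) : Prop :=
  match w with
  | [::] => u = v
  | l :: w' => exists v', act fC v l v' /\ actw fC v' w' u
  end.

Definition Loop (B C : DeltaComplex) (fC : forall k, cell C k -> cell B k)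
    (v : cell C 0) : word B -> Prop :=
  fun w => actw fC v w v.

Definition cover_data (B C : DeltaComplex) (fC : forall k, cell C k -> cell B k)
    (u : cell C 0) (H : word B -> Prop)
    (D : DeltaComplex) (fD : forall k, cell D k -> cell B k)
    (f : forall k, cell D k -> cell C k) (v : cell D 0) : Prop :=
  connected D /\ is_immersion fD /\ is_immersion f /\
  (forall k x, fC k (f k x) = fD k x) /\
  f 0 v = u /\ (forall w, Loop fD v w <-> H w).

From mathcomp Require Import all_boot zify.
From Stdlib Require Import Setoid Morphisms ClassicalEpsilon ProofIrrelevance
  FunctionalExtensionality PropExtensionality.
From Stdlib Require List.

(* M(X,P) acts on the vertices of a labeled complex by partial injections:
   labels are immersions, so every word has at most one walk from a given vertex,
   the defining relations hold along walks (a cell's boundary label is a loop at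
   its root), and idempotents act as partial identities. Label-preserving maps
   carry walks along, which gives (1).
   For (2), a k-cell of D_H is a cell c of C together with the closed coset
   (H m)^omega of a path m from u to the root of c, subject to m e_c m^-1 in H for
   the idempotent e_c of c. The relations rho = rho bl(rho) make faces of such
   cells again cells of D_H; the simplicial identities at the front corner come
   from the boundary triangle of the 2-face [v0, v1, v2]. Two covers with the same
   loop monoid are identified by matching cells that lie over the same cell of C
   and are reached from the base vertices by a common word.
   For (3), an isomorphism D_H -> D_K moves the base vertex along a path m of D_K,
   and m conjugates H onto K; conversely, rebasing D_K at the end of m yields a
   cover with loop monoid H, to which uniqueness applies. *)

Set Implicit Arguments.
Unset Strict Implicit.
Unset Printing Implicit Defensive.

Lemma inv_wordK (T : Type) (w : seq (T * bool)) : inv_word (inv_word w) = w.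
Proof.
rewrite /inv_word map_rev revK -map_comp.
by elim: w => [|[a b] w IH] //=; rewrite negbK IH.
Qed.

Lemma inv_word_cat (T : Type) (u v : seq (T * bool)) :
  inv_word (u ++ v) = inv_word v ++ inv_word u.
Proof. by rewrite /inv_word map_cat rev_cat. Qed.

Lemma inv_word_cons (T : Type) (l : T * bool) w :
  inv_word (l :: w) = inv_word w ++ [:: (l.1, ~~ l.2)].
Proof. by rewrite /inv_word /= rev_cons cats1. Qed.

(** * The inverse monoid presented by Vagner's relations *)

Section InverseMonoid.
Variables (A : Type) (R : seq (A * bool) -> seq (A * bool) -> Prop).
Local Notation E := (icong R).
Local Notation inv := (@inv_word A).

#[local] Hint Resolve ic_refl : core.

#[global] Instance icong_equiv : Equivalence (icong R).
Proof. split; [exact: ic_refl | exact: ic_sym | exact: ic_trans]. Qed.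

#[global] Instance cat_icong : Proper (icong R ==> icong R ==> icong R) (@cat (A * bool)).
Proof.
move=> u u' Hu v v' Hv; apply: (ic_trans (ic_ctx [::] v Hu)) => /=.
by have := ic_ctx u' [::] Hv; rewrite !cats0.
Qed.

Lemma icong_mulVK u : E (inv u ++ u ++ inv u) (inv u).
Proof. by have := ic_vagner1 R (inv u); rewrite inv_wordK. Qed.

(* In a regular semigroup whose idempotents commute, inverses are unique. *)
Lemma icong_inverse_unique a x y :
  E (a ++ x ++ a) a -> E (x ++ a ++ x) x -> E (a ++ y ++ a) a -> E (y ++ a ++ y) y ->
  E ((x ++ a) ++ (y ++ a)) ((y ++ a) ++ (x ++ a)) ->
  E ((a ++ x) ++ (a ++ y)) ((a ++ y) ++ (a ++ x)) -> E x y.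
Proof.
move=> axa xax aya yay C1 C2.
have Hx : E x (y ++ a ++ x).
  rewrite -{1}xax -{1}aya.
  have -> : x ++ (a ++ y ++ a) ++ x = ((x ++ a) ++ (y ++ a)) ++ x by rewrite -!catA.
  by rewrite C1 -!catA (catA x a x) -(catA x) xax.
have Hy : E y (y ++ a ++ x).
  rewrite -{1}yay -{1}axa.
  have -> : y ++ (a ++ x ++ a) ++ y = y ++ ((a ++ x) ++ (a ++ y)) by rewrite -!catA.
  rewrite C2 -!catA [X in E X _](_ : _ = (y ++ a ++ y) ++ a ++ x); last by rewrite -!catA.
  by rewrite yay.
exact: ic_trans Hx (ic_sym Hy).
Qed.

Lemma icong_inv u v : E u v -> E (inv u) (inv v).
Proof.
move=> Huv; apply: (icong_inverse_unique (a := v)).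
- by apply: (ic_trans _ Huv); rewrite -Huv ic_vagner1.
- by rewrite -Huv icong_mulVK.
- exact: ic_vagner1.
- exact: icong_mulVK.
- have h := ic_vagner2 R (inv u) (inv v); rewrite !inv_wordK in h.
  rewrite -!catA; apply: ic_trans (ic_trans (ic_ctx (inv u) (inv v ++ v) (ic_sym Huv)) h) _.
  by have := ic_ctx (inv v ++ v ++ inv u) [::] Huv; rewrite -!catA !cats0.
- have h := ic_vagner2 R u v; rewrite -!catA.
  apply: ic_trans (ic_trans (ic_ctx [::] (inv u ++ v ++ inv v) (ic_sym Huv)) h) _.
  by have := ic_ctx (v ++ inv v) (inv u) Huv; rewrite -!catA.
Qed.

Definition idem (e : seq (A * bool)) := E (e ++ e) e.

Lemma idem_mulV u : idem (u ++ inv u).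
Proof. by have := ic_ctx [::] (inv u) (ic_vagner1 R u); rewrite /idem /= -!catA. Qed.

Lemma idem_Vmul u : idem (inv u ++ u).
Proof. by have := idem_mulV (inv u); rewrite inv_wordK. Qed.

Lemma idem_inv e : idem e -> E (inv e) e.
Proof.
move=> He.
have H1 : E (inv e) (e ++ inv e ++ inv e ++ e).
  rewrite -[X in E X _]icong_mulVK -[X in inv e ++ X ++ _]He.
  by have := ic_vagner2 R (inv e) e; rewrite inv_wordK -!catA.
have H3 : E (e ++ inv e) (inv e) by rewrite [X in E _ X]H1 [X in E (_ ++ X) _]H1 !catA He.
have H4 : E (inv e ++ e) (inv e) by rewrite [X in E _ X]H1 [X in E (X ++ _) _]H1 -!catA He.
by rewrite -[X in E _ X](ic_vagner1 R e) catA H3 H4.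
Qed.

Lemma idem_mulVE e : idem e -> E e (e ++ inv e).
Proof. by move=> He; rewrite idem_inv // He. Qed.

Lemma idem_commute e f : idem e -> idem f -> E (e ++ f) (f ++ e).
Proof. by move=> He Hf; rewrite (idem_mulVE He) (idem_mulVE Hf) -!catA ic_vagner2. Qed.

Lemma idem_cat e f : idem e -> idem f -> idem (e ++ f).
Proof.
move=> He Hf; rewrite /idem.
have -> : (e ++ f) ++ e ++ f = e ++ (f ++ e) ++ f by rewrite -!catA.
rewrite -(idem_commute He Hf).
have -> : e ++ (e ++ f) ++ f = (e ++ e) ++ (f ++ f) by rewrite -!catA.
by rewrite He Hf.
Qed.

Lemma idem_conj m e : idem e -> idem (m ++ e ++ inv m).
Proof.
move=> He; rewrite /idem.
have -> : (m ++ e ++ inv m) ++ m ++ e ++ inv m = m ++ e ++ ((inv m ++ m) ++ e) ++ inv m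
  by rewrite -!catA.
rewrite (idem_commute (idem_Vmul m) He).
have -> : m ++ e ++ (e ++ inv m ++ m) ++ inv m = m ++ (e ++ e) ++ (inv m ++ m ++ inv m)
  by rewrite -!catA.
by rewrite He icong_mulVK.
Qed.

(* Deleting an idempotent from a word moves it up in the natural partial order. *)
Lemma idem_insert_le a e b :
  idem e -> exists f, idem f /\ E (a ++ e ++ b) (f ++ a ++ b).
Proof.
move=> He; exists (a ++ e ++ inv a); split; first exact: idem_conj.
have -> : (a ++ e ++ inv a) ++ a ++ b = a ++ (e ++ (inv a ++ a)) ++ b by rewrite -!catA.
rewrite -(idem_commute (idem_Vmul a) He).
have -> : a ++ ((inv a ++ a) ++ e) ++ b = (a ++ inv a ++ a) ++ e ++ b by rewrite -!catA.
by rewrite ic_vagner1.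
Qed.

Lemma idem_letters p : List.Forall (fun l => idem [:: l]) p -> idem p.
Proof. by elim=> [|l r hl _ IH]; [rewrite /idem | exact: (idem_cat hl IH)]. Qed.

Definition absorbs a w := E (a ++ w) a.

Lemma absorbs_nil a : absorbs a [::].
Proof. by rewrite /absorbs cats0. Qed.

Lemma absorbs_cat a p q : absorbs a p -> absorbs a q -> absorbs a (p ++ q).
Proof. by rewrite /absorbs => hp hq; rewrite catA hp hq. Qed.

Lemma absorbs_suffix a p q : absorbs a p -> absorbs a (p ++ q) -> absorbs a q.
Proof. by rewrite /absorbs => hp hpq; rewrite -[X in E (X ++ _) _]hp -catA hpq. Qed.

Lemma absorbs_trans a f w : absorbs a f -> absorbs f w -> absorbs a w.
Proof. by rewrite /absorbs => h1 h2; rewrite -[X in E (X ++ _) _]h1 -catA h2 h1. Qed.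

Lemma absorbs_idem_cat a p q : idem p -> idem q -> absorbs a (p ++ q) ->
  absorbs a p /\ absorbs a q.
Proof.
rewrite /absorbs => hp hq h; split.
- rewrite -[X in E (X ++ _) _]h.
  have -> : (a ++ p ++ q) ++ p = a ++ p ++ (q ++ p) by rewrite -!catA.
  by rewrite (idem_commute hq hp) (catA p p q) hp.
- by rewrite -[X in E (X ++ _) _]h -!catA hq.
Qed.

Lemma absorbs_all_idem a p :
  List.Forall (fun l => idem [:: l]) p -> absorbs a (p ++ inv p) -> absorbs a p.
Proof.
move=> hp; rewrite /absorbs.
by have idem_p := idem_letters hp; rewrite (idem_inv idem_p) idem_p.
Qed.

Lemma absorbs_letters a p : List.Forall (fun l => idem [:: l]) p ->
  absorbs a p -> List.Forall (fun l => absorbs a [:: l]) p.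
Proof.
elim=> [//|l r hl hr IH] hf.
have [hla hra] := absorbs_idem_cat hl (idem_letters hr) hf.
by constructor; [exact: hla | exact: IH].
Qed.

Section IdempotentAbsorbs.
Variable a : seq (A * bool).
Hypothesis idem_a : idem a.

Lemma absorbs_inv w : absorbs a w -> absorbs a (inv w).
Proof.
rewrite /absorbs => h.
have hl : E (inv w ++ a) a.
  by have := icong_inv h; rewrite inv_word_cat (idem_inv idem_a).
have h1 : E a (a ++ w ++ inv w).
  rewrite -[X in E X _]idem_a -[X in E (X ++ _) _]h -[X in E (_ ++ X) _]hl.
  have -> : (a ++ w) ++ inv w ++ a = a ++ ((w ++ inv w) ++ a) by rewrite -!catA.
  by rewrite -(idem_commute idem_a (idem_mulV w)) catA idem_a.
by rewrite [X in E _ X]h1 -[X in E (X ++ _) _]h -catA.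
Qed.

Lemma absorbs_mulV w : absorbs a w -> absorbs a (w ++ inv w).
Proof. by move=> h; apply: absorbs_cat h (absorbs_inv h). Qed.

Lemma absorbs_prefix p q : absorbs a (p ++ q) -> absorbs a (p ++ inv p).
Proof.
move=> h; have h1 := absorbs_mulV h; rewrite /absorbs inv_word_cat in h1 *.
rewrite -[X in E (X ++ _) _]h1.
have -> : (a ++ (p ++ q) ++ inv q ++ inv p) ++ p ++ inv p =
  (a ++ p ++ q ++ inv q) ++ (inv p ++ p ++ inv p) by rewrite -!catA.
by rewrite icong_mulVK; move: h1; rewrite -!catA.
Qed.

End IdempotentAbsorbs.
End InverseMonoid.

(** * Labeled complexes and the action on vertices *)

Section Faces.
Variable D : DeltaComplex.

Lemma root_face k (c : cell D k.+1) i : 0 < i <= k.+1 -> root (face c i) = root c.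
Proof.
elim: k c i => [|k IH] c i; first by case: i => [|[|]].
move=> /andP [i0 ik]; case: (ltngtP i k.+2) ik => // [ilt _|-> _ //].
have -> : root (face c i) = root (face (face c k.+2) i) by rewrite [in RHS]face_face.
by rewrite IH ?i0.
Qed.

Lemma src_front m (c : cell D m.+1) : src (front c) = root c.
Proof. by elim: m c => [|m IH] c //=. Qed.

Lemma tgt_front m (c : cell D m.+1) : tgt (front c) = root (face c 0).
Proof. by elim: m c => [|m IH] c //=; rewrite IH face_face. Qed.

Lemma front_face m (c : cell D m.+2) j : 2 <= j <= m.+2 -> front (face c j) = front c.
Proof.
elim: m c j => [|m IH] c j; first by case: j => [|[|[|]]].
move=> /andP [j2 jm].
case: (ltngtP j m.+3) jm => // [jlt _|-> _ //].
have -> : front (face c j) = front (face (face c m.+3) j) by rewrite [in RHS]face_face.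
by rewrite IH ?j2.
Qed.

End Faces.

Section Morphisms.
Variables (D E : DeltaComplex) (f : forall k, cell D k -> cell E k).
Arguments f : clear implicits.
Hypothesis f_morph : is_morphism f.

Lemma morph_root k (c : cell D k) : f 0 (root c) = root (f k c).
Proof. by elim: k c => [|k IH] c //; rewrite /root /= -f_morph // IH. Qed.

Lemma morph_vert k (c : cell D k) i : f 0 (vert c i) = vert (f k c) i.
Proof. by elim: k c i => [|k IH] c i //=; case: ifP => _; rewrite IH f_morph. Qed.

Lemma morph_front m (c : cell D m.+1) : f 1 (front c) = front (f m.+1 c).
Proof. by elim: m c => [|m IH] c //=; rewrite IH f_morph. Qed.

Lemma morph_src (e : cell D 1) : f 0 (src e) = src (f 1 e).
Proof. by rewrite /src f_morph. Qed.

Lemma morph_tgt (e : cell D 1) : f 0 (tgt e) = tgt (f 1 e).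
Proof. by rewrite /tgt f_morph. Qed.

End Morphisms.

Section Action.
Variables (B D : DeltaComplex) (fD : forall k, cell D k -> cell B k).
Arguments fD : clear implicits.

Lemma actw_cat v u w x :
  actw fD v (u ++ w) x <-> exists y, actw fD v u y /\ actw fD y w x.
Proof.
elim: u v => [|l u IH] v /=; first by split=> [h|[y [-> h]]]; first exists v.
split=> [[v' [h1 /IH [y [h2 h3]]]] | [y [[v' [h1 h2]] h3]]].
- by exists y; split=> //; exists v'.
- by exists v'; split=> //; apply/IH; exists y.
Qed.

Lemma actw1 v l w : actw fD v [:: l] w <-> act fD v l w.
Proof. by split=> /= [[v' [h ->]] | h]; last exists w. Qed.

Lemma act_flip v l w : act fD v (l.1, ~~ l.2) w <-> act fD w l v.
Proof.
case: l => [[[|j] r] b] /=.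
- by case: b; split=> [[e [he [h1 h2]]]|[e [he [h1 h2]]]]; exists e.
- by split=> [[-> h]|[-> h]].
Qed.

Lemma actw_inv v w x : actw fD v (inv_word w) x <-> actw fD x w v.
Proof.
elim: w v x => [|l w IH] v x /=; first by split=> ->.
rewrite inv_word_cons; split.
- by move=> /actw_cat [y [/IH h1 /actw1 /act_flip h2]]; exists y.
- by move=> [y [/act_flip h1 /IH h2]]; apply/actw_cat; exists y; split=> //; apply/actw1.
Qed.

Lemma vconn_actw x y : vconn x y -> exists m, actw fD x m y.
Proof.
elim=> {x y} [x | e | x y _ [m h] | x y z _ [m1 h1] _ [m2 h2]].
- by exists [::].
- by exists [:: gpos 0 (fD 1 e)]; apply/actw1; exists e.
- by exists (inv_word m); apply/actw_inv.
- by exists (m1 ++ m2); apply/actw_cat; exists y.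
Qed.

Lemma actw_vconn x w y : actw fD x w y -> vconn x y.
Proof.
elim: w x => [|[[[|j] r] b] w IH] x /=; first by move=> ->; exact: vc_refl.
- move=> [z [[e [_ hb]] /IH hzy]]; apply: vc_trans hzy.
  by case: b hb => [[<- <-]|[<- <-]]; [apply: vc_sym|]; exact: vc_edge.
- by move=> [z [[-> _] /IH]].
Qed.

Hypothesis fD_imm : is_immersion fD.

Lemma immersion_root_inj k (d d' : cell D k) : root d = root d' -> fD k d = fD k d' -> d = d'.
Proof. exact: fD_imm.2 k d d' 0 (leq0n k). Qed.

Lemma act_functional v l w w' : act fD v l w -> act fD v l w' -> w = w'.
Proof.
case: l => [[[|j] r] b] /=; last by move=> [-> _] [-> _].
case: b.
- move=> [e [he [<- h2]]] [e' [he' [<- h2']]].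
  by rewrite (fD_imm.2 1 e e' 1 erefl) ?he ?he' //; exact: etrans h2 (esym h2').
- move=> [e [he [h1 <-]]] [e' [he' [h1' <-]]].
  by rewrite (fD_imm.2 1 e e' 0 erefl) ?he ?he' //; exact: etrans h1 (esym h1').
Qed.

Lemma actw_functional v w x x' : actw fD v w x -> actw fD v w x' -> x = x'.
Proof.
elim: w v => [|l w IH] v /=; first by move=> -> ->.
move=> [y [h1 h2]] [y' [h1' h2']].
by move: h2; rewrite (act_functional h1 h1') => /IH; apply.
Qed.

Lemma actw_injective v v' w x : actw fD v w x -> actw fD v' w x -> v = v'.
Proof. by move=> /actw_inv h1 /actw_inv h2; exact: actw_functional h1 h2. Qed.

Lemma actw_mulV v w x :
  actw fD v (w ++ inv_word w) x <-> x = v /\ exists y, actw fD v w y.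
Proof.
split=> [/actw_cat [y [h1 /actw_inv h2]] | [-> [y h]]].
- by split; [exact: actw_injective h2 h1 | exists y].
- by apply/actw_cat; exists y; split=> //; apply/actw_inv.
Qed.

Lemma actw_top_faces m (d : cell D m.+3) s : (forall i, i \in s -> 0 < i <= m.+3) ->
  actw fD (root d) [seq gpos m.+1 (face (fD m.+3 d) i) | i <- s] (root d).
Proof.
elim: s => [|i s IH] //= hs.
have hi : 0 < i <= m.+3 by apply: hs; rewrite mem_head.
exists (root d); split; last by apply: IH => i' hi'; apply: hs; rewrite in_cons hi' orbT.
by split=> //; exists (face d i); rewrite fD_imm.1 ?root_face //; case/andP: hi.
Qed.

Lemma actw_bl j (c : cell D j.+2) : actw fD (root c) (bl_gen (fD j.+2 c)) (root c).
Proof.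
have f_morph := fD_imm.1.
case: j c => [|m] c.
- exists (tgt (face c 2)); split; first by exists (face c 2); rewrite f_morph.
  exists (tgt (face c 0)); split.
    exists (face c 0); rewrite f_morph //; do 2!split=> //.
    by rewrite /src /tgt [in RHS]face_face.
  exists (root c); split=> //; exists (face c 1); rewrite f_morph //; do 2!split.
  - by rewrite /src /root /= [in RHS]face_face.
  - by rewrite /tgt face_face.
- rewrite /bl_gen; apply/actw_cat; exists (root c); split.
    by apply: actw_top_faces => i; rewrite mem_rev mem_iota add1n ltnS.
  have front_fD : fD 1 (front c) = front (fD m.+3 c) by rewrite (morph_front f_morph).
  exists (root (face c 0)); split; first by exists (front c); rewrite src_front tgt_front.
  exists (root (face c 0)); split; first by split=> //; exists (face c 0); rewrite f_morph.
  exists (root c); split=> //.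
  by exists (front c); rewrite src_front tgt_front.
Qed.

Lemma actw_Brel u v : Brel u v -> forall x y, actw fD x u y <-> actw fD x v y.
Proof.
move=> [j [c [[-> ->]|[-> ->]]]] x y /=.
- split=> [[x1 [[-> h] [x2 [[-> _] ->]]]] | [x1 [[-> h] ->]]]; first by exists x.
  by exists x; split=> //; exists x.
- split=> [[x1 [[-> [c' [h1 h2]]] ->]] | [x1 [[-> [c' [h1 h2]]] hb]]].
  + exists x; split; first by split=> //; exists c'.
    by have := actw_bl c'; rewrite h1 h2.
  + exists x; split; first by split=> //; exists c'.
    by have := actw_bl c'; rewrite h1 h2; apply: actw_functional.
Qed.

Lemma actw_Meq u v : Meq u v -> forall x y, actw fD x u y <-> actw fD x v y.
Proof.
have idem_walk a b x y : actw fD x (a ++ inv_word a ++ b ++ inv_word b) y <->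
    y = x /\ (exists z, actw fD x a z) /\ (exists z, actw fD x b z).
  rewrite catA actw_cat.
  split=> [[z [/actw_mulV [-> ha] /actw_mulV [-> hb]]] // | [-> [ha hb]]].
  by exists x; split; apply/actw_mulV.
elim=> {u v} [u v /actw_Brel // | // | u v _ h x y | u v w _ h1 _ h2 x y
  | l r u v _ h x y | u x y | u v x y].
- by rewrite h.
- by rewrite h1 h2.
- rewrite !actw_cat.
  by split=> [[y1 [h1 /actw_cat [y2 [/h h2 h3]]]] | [y1 [h1 /actw_cat [y2 [/h h2 h3]]]]];
    exists y1; split=> //; apply/actw_cat; exists y2.
- rewrite catA actw_cat.
  split=> [[z [/actw_mulV [-> _] //]] | h].
  by exists x; split=> //; apply/actw_mulV; split=> //; exists y.
- by rewrite !idem_walk; tauto.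
Qed.

Lemma actw_idem e x y : Meq (e ++ e) e -> actw fD x e y -> y = x.
Proof. by move=> He /(actw_Meq (idem_mulVE He)) /actw_mulV []. Qed.

End Action.

Section MorphismAction.
Variables (B D E : DeltaComplex) (fD : forall k, cell D k -> cell B k)
  (fE : forall k, cell E k -> cell B k) (f : forall k, cell D k -> cell E k).
Arguments fD : clear implicits.
Arguments fE : clear implicits.
Arguments f : clear implicits.
Hypothesis f_morph : is_morphism f.
Hypothesis f_label : forall k x, fE k (f k x) = fD k x.

Lemma morph_act v l w : act fD v l w -> act fE (f 0 v) l (f 0 w).
Proof.
case: l => [[[|j] r] b] /=.
- move=> [e [he hb]]; exists (f 1 e).
  rewrite f_label he -(morph_src f_morph) -(morph_tgt f_morph).
  by split=> //; case: b hb => [[-> ->]|[-> ->]].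
- move=> [-> [c [hc hr]]]; split=> //.
  by exists (f _ c); rewrite f_label -(morph_root f_morph) hr.
Qed.

Lemma morph_actw v w x : actw fD v w x -> actw fE (f 0 v) w (f 0 x).
Proof.
elim: w v => [|l w IH] v /=; first by move=> ->.
by move=> [y [h1 h2]]; exists (f 0 y); split; [exact: morph_act | exact: IH].
Qed.

End MorphismAction.

Lemma Loop_closed_inv_submonoid (B C D : DeltaComplex)
    (fC : forall k, cell C k -> cell B k) (fD : forall k, cell D k -> cell B k)
    (f : forall k, cell D k -> cell C k) :
  is_immersion fD -> is_morphism f -> (forall k x, fC k (f k x) = fD k x) ->
  forall v, subset_w (Loop fD v) (Loop fC (f 0 v)) /\
            closed_inv_submonoid_of (Loop fC (f 0 v)) (Loop fD v).
Proof.
move=> fD_imm f_morph f_label v.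
have sub : subset_w (Loop fD v) (Loop fC (f 0 v)) by move=> w; exact: morph_actw.
split=> //; split; [|split=> //].
- split; first by move=> u w huw; apply: (actw_Meq fD_imm huw v v).1.
  split=> //; split=> [a b ha hb | a ha]; [by apply/actw_cat; exists v | exact/actw_inv].
- move=> a b ha _ [e [He /actw_Meq hab]].
  have /actw_cat [z [hz hb]] := (hab _ _ fD_imm v v).1 ha.
  by rewrite (actw_idem fD_imm He hz) in hb.
Qed.

(* The idempotent of M(X,P) defined exactly at the roots of the k-cells labeled [l]. *)
Definition root_idem (B : DeltaComplex) (k : nat) : cell B k -> word B :=
  match k return cell B k -> word B with
  | 0 => fun _ => [::]
  | 1 => fun x => [:: gpos 0 x; gneg 0 x]
  | j.+2 => fun r => [:: gpos j.+1 r]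
  end.

Section RootIdem.
Variables (B D : DeltaComplex) (fD : forall k, cell D k -> cell B k).
Arguments fD : clear implicits.

Lemma actw_root_idem k (d : cell D k) : actw fD (root d) (root_idem (fD k d)) (root d).
Proof.
case: k d => [|[|j]] d //=.
- by exists (tgt d); split; [exists d | exists (root d); split=> //; exists d].
- by exists (root d); split=> //; split=> //; exists d.
Qed.

Lemma actw_root_idem_cell k (l : cell B k) y z : single_vertex B ->
  actw fD y (root_idem l) z -> exists d : cell D k, fD k d = l /\ root d = y.
Proof.
move=> [b0 Hb]; case: k l => [|[|j]] l /=.
- by move=> _; exists y; rewrite (Hb l) (Hb (fD 0 y)).
- by move=> [y1 [[e [he [h1 h2]]] _]]; exists e.
- by move=> [y1 [[_ [c [h1 h2]]] _]]; exists c.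
Qed.

End RootIdem.

(** * Uniqueness of covers *)

Section CoverUniqueness.
Variables (B C : DeltaComplex) (fC : forall k, cell C k -> cell B k).
Arguments fC : clear implicits.
Variables (u : cell C 0) (H : word B -> Prop).
Variables (D1 : DeltaComplex) (fD1 : forall k, cell D1 k -> cell B k)
  (f1 : forall k, cell D1 k -> cell C k) (v1 : cell D1 0).
Variables (D2 : DeltaComplex) (fD2 : forall k, cell D2 k -> cell B k)
  (f2 : forall k, cell D2 k -> cell C k) (v2 : cell D2 0).
Arguments fD1 : clear implicits.
Arguments f1 : clear implicits.
Arguments fD2 : clear implicits.
Arguments f2 : clear implicits.

Definition matched k (d1 : cell D1 k) (d2 : cell D2 k) :=
  f2 k d2 = f1 k d1 /\ exists m, actw fD1 v1 m (root d1) /\ actw fD2 v2 m (root d2).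

Hypothesis B_single : single_vertex B.
Hypothesis fC_imm : is_immersion fC.
Hypothesis cover1 : cover_data fC u H fD1 f1 v1.
Hypothesis cover2 : cover_data fC u H fD2 f2 v2.

Lemma covers_same_Loop w : Loop fD1 v1 w <-> Loop fD2 v2 w.
Proof. by rewrite cover1.2.2.2.2.2 cover2.2.2.2.2.2. Qed.

Lemma matched_exists k (d1 : cell D1 k) : exists d2, matched d1 d2.
Proof.
have [D1_conn [fD1_imm [f1_imm [f1_label [f1_v1 _]]]]] := cover1.
have [_ [fD2_imm [f2_imm [f2_label [f2_v2 _]]]]] := cover2.
have [m hm] := vconn_actw fD1 (D1_conn v1 (root d1)).
have /covers_same_Loop : Loop fD1 v1 (m ++ root_idem (fD1 k d1) ++ inv_word m).
  apply/actw_cat; exists (root d1); split=> //.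
  apply/actw_cat; exists (root d1); split; [exact: actw_root_idem | exact/actw_inv].
move=> /actw_cat [y2 [hy2 /actw_cat [z [hz /actw_inv hz']]]].
move: hz; rewrite (actw_functional fD2_imm hz' hy2) => hz.
have [d2 [hd2 hr2]] := actw_root_idem_cell B_single hz.
exists d2; split; last by exists m; rewrite hr2.
apply: (immersion_root_inj fC_imm); last by rewrite f1_label f2_label hd2.
rewrite -(morph_root f2_imm.1) -(morph_root f1_imm.1) hr2.
have := morph_actw f1_imm.1 f1_label hm; have := morph_actw f2_imm.1 f2_label hy2.
rewrite f1_v1 f2_v2 => a2 a1; exact: (actw_functional fC_imm a2 a1).
Qed.

Lemma matched_unique k (d1 : cell D1 k) d2 d2' : matched d1 d2 -> matched d1 d2' -> d2 = d2'.
Proof.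
have [_ [_ [f2_imm _]]] := cover2; have fD2_imm := cover2.2.1.
move=> [h1 [m [hm1 hm2]]] [h1' [m' [hm1' hm2']]].
have /covers_same_Loop : Loop fD1 v1 (m ++ inv_word m').
  by apply/actw_cat; exists (root d1); split=> //; apply/actw_inv.
move=> /actw_cat [z [hz /actw_inv hz']].
apply: (immersion_root_inj f2_imm); last by rewrite h1 h1'.
by rewrite -(actw_functional fD2_imm hz hm2) -(actw_functional fD2_imm hz' hm2').
Qed.

Lemma matched_face k (d1 : cell D1 k.+1) d2 i : i <= k.+1 -> matched d1 d2 ->
  matched (face d1 i) (face d2 i).
Proof.
have [_ [fD1_imm [f1_imm [f1_label _]]]] := cover1.
have [_ [fD2_imm [f2_imm [f2_label _]]]] := cover2.
move=> hi [h1 [m [hm1 hm2]]]; split; first by rewrite f2_imm.1 // h1 -f1_imm.1.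
case: i hi => [|i] hi; last by exists m; rewrite !root_face.
exists (m ++ [:: gpos 0 (fD1 1 (front d1))]); split.
- apply/actw_cat; exists (root d1); split=> //; apply/actw1.
  by exists (front d1); rewrite src_front tgt_front.
- apply/actw_cat; exists (root d2); split=> //; apply/actw1.
  exists (front d2); rewrite src_front tgt_front; split=> //.
  by rewrite (morph_front fD2_imm.1) (morph_front fD1_imm.1) -f1_label -f2_label h1.
Qed.

Lemma matched_morphism : exists h : forall k, cell D1 k -> cell D2 k,
  is_morphism h /\ forall k d1, matched d1 (h k d1).
Proof.
pose h k (d1 : cell D1 k) := proj1_sig (constructive_indefinite_description _ (matched_exists d1)).
have h_matched k (d1 : cell D1 k) : matched d1 (h k d1).
  exact: proj2_sig (constructive_indefinite_description _ _).
exists h; split=> // k c i hi.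
exact: matched_unique (h_matched _ _) (matched_face hi (h_matched _ _)).
Qed.

End CoverUniqueness.

Lemma matched_sym (B C D1 D2 : DeltaComplex)
    (fD1 : forall k, cell D1 k -> cell B k) (f1 : forall k, cell D1 k -> cell C k)
    (v1 : cell D1 0) (fD2 : forall k, cell D2 k -> cell B k)
    (f2 : forall k, cell D2 k -> cell C k) (v2 : cell D2 0) k (d1 : cell D1 k) d2 :
  matched fD1 f1 v1 fD2 f2 v2 d1 d2 -> matched fD2 f2 v2 fD1 f1 v1 d2 d1.
Proof. by case=> e [m [h1 h2]]; split=> //; exists m. Qed.

Lemma cover_unique (B C : DeltaComplex) (fC : forall k, cell C k -> cell B k)
    (u : cell C 0) (H : word B -> Prop)
    (D1 : DeltaComplex) (fD1 : forall k, cell D1 k -> cell B k)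
    (f1 : forall k, cell D1 k -> cell C k) (v1 : cell D1 0)
    (D2 : DeltaComplex) (fD2 : forall k, cell D2 k -> cell B k)
    (f2 : forall k, cell D2 k -> cell C k) (v2 : cell D2 0) :
  single_vertex B -> is_immersion fC ->
  cover_data fC u H fD1 f1 v1 -> cover_data fC u H fD2 f2 v2 ->
  exists h : forall k, cell D1 k -> cell D2 k,
    is_iso h /\ (forall k x, fD2 k (h k x) = fD1 k x) /\
    (forall k x, f2 k (h k x) = f1 k x) /\ h 0 v1 = v2.
Proof.
move=> B_single fC_imm cover1 cover2.
have [h [h_morph h_matched]] := matched_morphism B_single fC_imm cover1 cover2.
have [g [g_morph g_matched]] := matched_morphism B_single fC_imm cover2 cover1.
have gh k (x : cell D1 k) : g k (h k x) = x.
  exact: (matched_unique cover2 cover1 (g_matched _ _) (matched_sym (h_matched _ _))).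
have hg k (y : cell D2 k) : h k (g k y) = y.
  exact: (matched_unique cover1 cover2 (h_matched _ _) (matched_sym (g_matched _ _))).
have [_ [_ [_ [f1_label [f1_v1 _]]]]] := cover1.
have [_ [_ [_ [f2_label [f2_v2 _]]]]] := cover2.
exists h; split; last split; last split.
- by split=> //; exists g.
- by move=> k x; rewrite -f2_label (h_matched k x).1 f1_label.
- by move=> k x; rewrite (h_matched k x).1.
- apply: (matched_unique cover1 cover2 (h_matched _ _)).
  by split; [rewrite f1_v1 f2_v2 | exists [::]].
Qed.

(** * The defining relations of M(X,P) *)

Section DefiningRelations.
Variable B : DeltaComplex.
Local Notation idemB := (idem (@Brel B)).
Local Notation absorbsB := (absorbs (@Brel B)).

Lemma idem_gpos j (r : cell B j.+2) : idemB [:: gpos j.+1 r].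
Proof. by apply: ic_rel; exists j, r; left. Qed.

Lemma absorbs_bl j (r : cell B j.+2) : absorbsB [:: gpos j.+1 r] (bl_gen r).
Proof. by apply: ic_sym; apply: ic_rel; exists j, r; right. Qed.

Lemma idem_root_idem k (l : cell B k) : idemB (root_idem l).
Proof.
case: k l => [|[|j]] l; [exact: ic_refl | exact: (idem_mulV _ [:: gpos 0 l]) | exact: idem_gpos].
Qed.

Let top_faces m (r : cell B m.+3) := [seq gpos m.+1 (face r i) | i <- rev (iota 1 m.+3)].

Lemma idem_top_faces m (r : cell B m.+3) : List.Forall (fun l => idemB [:: l]) (top_faces r).
Proof.
by rewrite /top_faces; elim: (rev _) => [|i s IH] /=; constructor=> //; exact: idem_gpos.
Qed.

Lemma absorbs_top_faces m (r : cell B m.+3) : absorbsB [:: gpos m.+2 r] (top_faces r).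
Proof.
apply: (absorbs_all_idem (idem_top_faces r)).
exact: (absorbs_prefix (idem_gpos _) (absorbs_bl r)).
Qed.

Lemma absorbs_top_face m (r : cell B m.+3) i : 0 < i <= m.+3 ->
  absorbsB [:: gpos m.+2 r] [:: gpos m.+1 (face r i)].
Proof.
move=> hi; have := absorbs_letters (idem_top_faces r) (absorbs_top_faces r).
have : i \in rev (iota 1 m.+3) by rewrite mem_rev mem_iota add1n ltnS.
rewrite /top_faces; elim: (rev _) => [|j s IH]; rewrite ?in_nil ?in_cons //.
case/orP=> [/eqP -> | his] hF; first exact: List.Forall_inv hF.
exact: IH his (List.Forall_inv_tail hF).
Qed.

Lemma absorbs_triangle m (r : cell B m.+2) : absorbsB (root_idem r)
  [:: gpos 0 (front r); gpos 0 (front (face r 0)); gneg 0 (front (face r 1))].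
Proof.
elim: m r => [|m IH] r; first exact: absorbs_bl.
apply: absorbs_trans (absorbs_top_face r (i := m.+3) _) _; first by rewrite /= ltnSn.
have := IH (face r m.+3).
by rewrite [face (face r m.+3) 0]face_face // [face (face r m.+3) 1]face_face.
Qed.

Lemma absorbs_face0 k (r : cell B k.+1) : absorbsB (root_idem r)
  ([:: gpos 0 (front r)] ++ root_idem (face r 0) ++ [:: gneg 0 (front r)]).
Proof.
case: k r => [|[|m]] r; first exact: (idem_mulV _ [:: gpos 0 r]).
- exact: (absorbs_prefix (p := [:: _; _]) (idem_gpos r) (absorbs_bl r)).
- exact: absorbs_suffix (absorbs_top_faces r) (absorbs_bl r).
Qed.

Lemma absorbs_faces k (r : cell B k.+1) i : 0 < i <= k.+1 ->
  absorbsB (root_idem r) (root_idem (face r i)).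
Proof.
case: k r => [|[|m]] r; [by move=> _; exact: absorbs_nil | | exact: absorbs_top_face].
case: i => [|[|[|i]]] // _.
- exact: (absorbs_prefix (p := [:: _]) (idem_gpos r) (absorbs_inv (idem_gpos r) (absorbs_bl r))).
- exact: (absorbs_prefix (p := [:: _]) (idem_gpos r) (absorbs_bl r)).
Qed.

Lemma absorbs_front k (r : cell B k.+1) :
  absorbsB (root_idem r) [:: gpos 0 (front r); gneg 0 (front r)].
Proof. exact: (absorbs_prefix (p := [:: _]) (idem_root_idem r) (absorbs_face0 r)). Qed.

Definition cell_letter j (r : cell B j.+2) (b : bool) : letter B :=
  (existT (fun j => cell B j.+1) j.+1 r, b).

Lemma cell_letter_idem j (r : cell B j.+2) b : Meq [:: cell_letter r b] [:: gpos j.+1 r].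
Proof. by case: b; [exact (idem_inv (idem_gpos r)) | exact: ic_refl]. Qed.

End DefiningRelations.

(** * Closed inverse submonoids and their cosets *)

Section ClosedSubmonoid.
Variables (B : DeltaComplex) (H : word B -> Prop).
Hypothesis H_closed : closed_inv_submonoid H.
Local Notation inv := inv_word.

Lemma closed_Meq a b : Meq a b -> H a -> H b.
Proof. exact: H_closed.1.1. Qed.

Lemma closed_nil : H [::].
Proof. exact: H_closed.1.2.1. Qed.

Lemma closed_cat a b : H a -> H b -> H (a ++ b).
Proof. exact: H_closed.1.2.2.1. Qed.

Lemma closed_inv a : H a -> H (inv a).
Proof. exact: H_closed.1.2.2.2. Qed.

Lemma closed_drop_idem w a e b : idem (@Brel B) e -> H w -> w = a ++ e ++ b -> H (a ++ b).
Proof.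
move=> he h ew; rewrite {}ew in h; have [f [hf hle]] := idem_insert_le a b he.
by apply: (H_closed.2 _ _ h I); exists f.
Qed.

Lemma closed_absorbs m e w : idem (@Brel B) e -> absorbs (@Brel B) e w ->
  H (m ++ e ++ inv m) -> H (m ++ w ++ inv m).
Proof.
move=> he hf h; apply: (closed_drop_idem (a := m) (b := w ++ inv m) he _ erefl).
by apply: closed_Meq h; rewrite (catA e w); apply: ic_sym; apply: ic_ctx.
Qed.

(* [coset m] stands for the closed coset (H m)^omega: it is determined by its
   representatives, the words [n] with [n n^-1] in [H] and [m n^-1] in [H]. *)
Definition admissible (m : word B) := H (m ++ inv m).
Definition coset (m : word B) : word B -> Prop := fun n => admissible n /\ H (m ++ inv n).
Definition coset_shift (S : word B -> Prop) (w : word B) : word B -> Prop :=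
  fun n => admissible n /\ exists m, S m /\ H (m ++ w ++ inv n).

Lemma admissible_prefix p q : admissible (p ++ q) -> admissible p.
Proof.
rewrite /admissible inv_word_cat => h.
by apply: (closed_drop_idem (idem_mulV _ q) h); rewrite -!catA.
Qed.

Lemma closed_mulV_sym m n : H (m ++ inv n) -> H (n ++ inv m).
Proof. by move/closed_inv; rewrite inv_word_cat inv_wordK. Qed.

Lemma closed_mulV_trans m n p : H (m ++ inv n) -> H (n ++ inv p) -> H (m ++ inv p).
Proof.
move=> h1 h2; apply: (closed_drop_idem (idem_Vmul _ n) (closed_cat h1 h2)).
by rewrite -!catA.
Qed.

Lemma coset_self m : admissible m -> coset m m.
Proof. by []. Qed.

Lemma eq_coset m n : H (m ++ inv n) -> coset m = coset n.
Proof.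
move=> h; apply: functional_extensionality => p; apply: propositional_extensionality.
split=> [[gp hp]|[gp hp]]; split=> //.
- exact: closed_mulV_trans (closed_mulV_sym h) hp.
- exact: closed_mulV_trans h hp.
Qed.

Lemma coset_eq_mulV m n : admissible n -> coset m = coset n -> H (m ++ inv n).
Proof. by move=> g e; have := coset_self g; rewrite -e => [[_ ?]]. Qed.

Lemma coset_shiftE m w : admissible (m ++ w) -> coset_shift (coset m) w = coset (m ++ w).
Proof.
move=> g; apply: functional_extensionality => n; apply: propositional_extensionality.
split=> [[gn [m1 [[gm1 h1] h2]]] | [gn h]]; split=> //.
- rewrite -catA; apply: (closed_drop_idem (idem_Vmul _ m1) (closed_cat h1 h2)).
  by rewrite -!catA.
- by exists m; split; [exact: coset_self (admissible_prefix g) | rewrite catA].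
Qed.

Lemma admissible_transfer m0 m w : H (m ++ inv m0) -> admissible (m0 ++ w) ->
  admissible (m ++ w) /\ coset (m0 ++ w) = coset (m ++ w).
Proof.
move=> h g0w.
have gmw : admissible (m ++ w).
  have P := closed_cat (closed_cat h g0w) (closed_mulV_sym h).
  have P1 : H (m ++ w ++ inv w ++ inv m0 ++ m0 ++ inv m).
    by apply: (closed_drop_idem (idem_Vmul _ m0) P); rewrite !inv_word_cat -!catA.
  suff : H ((m ++ w ++ inv w) ++ inv m) by rewrite /admissible inv_word_cat -!catA.
  by apply: (closed_drop_idem (idem_Vmul _ m0) P1); rewrite -!catA.
split=> //; apply: eq_coset; rewrite -catA.
by apply: (closed_drop_idem (idem_Vmul _ m) (closed_cat (closed_mulV_sym h) gmw)); rewrite -!catA.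
Qed.

Lemma admissible_mulV m w : admissible (m ++ w) ->
  admissible ((m ++ w) ++ inv w) /\ H ((m ++ w ++ inv w) ++ inv m).
Proof.
move=> g; split; last by move: g; rewrite /admissible inv_word_cat -!catA.
apply: closed_Meq g; rewrite !inv_word_cat inv_wordK -!catA.
by have := ic_ctx m (inv w ++ inv m) (ic_sym (ic_vagner1 (@Brel B) w)); rewrite -!catA.
Qed.

Lemma admissible_cell_letter m j (r : cell B j.+2) b :
  admissible (m ++ [:: cell_letter r b]) <-> H (m ++ [:: gpos j.+1 r] ++ inv m).
Proof.
have e : Meq ([:: cell_letter r b] ++ inv [:: cell_letter r b]) [:: gpos j.+1 r].
  rewrite /Meq (icong_inv (cell_letter_idem r b)) (cell_letter_idem r b).
  by rewrite (idem_inv (idem_gpos r)); exact: idem_gpos.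
rewrite /admissible inv_word_cat -catA.
split=> h; apply: closed_Meq h; [exact (ic_ctx m (inv m) e) | exact (ic_sym (ic_ctx m (inv m) e))].
Qed.

Lemma coset_cell_letter m j (r : cell B j.+2) b :
  admissible (m ++ [:: cell_letter r b]) -> coset (m ++ [:: cell_letter r b]) = coset m.
Proof.
move=> /admissible_cell_letter h; apply: eq_coset; rewrite -catA.
apply: closed_Meq h; exact (ic_ctx m (inv m) (ic_sym (cell_letter_idem r b))).
Qed.

End ClosedSubmonoid.

(** * The cover D_H *)

Section Construction.
Variables (B C : DeltaComplex) (fC : forall k, cell C k -> cell B k).
Arguments fC : clear implicits.
Hypothesis fC_imm : is_immersion fC.
Variables (u : cell C 0) (H : word B -> Prop).
Hypothesis H_closed : closed_inv_submonoid H.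
Local Notation inv := inv_word.
Local Notation admissible := (admissible H).
Local Notation coset := (coset H).
Local Notation coset_shift := (coset_shift H).

(* A k-cell of D_H is a cell c of C paired with the coset of a path m from u to
   the root of c along which the idempotent of c conjugates into H. *)
Definition DH_cell k (p : (word B -> Prop) * cell C k) : Prop :=
  exists m, p.1 = coset m /\ admissible m /\ actw fC u m (root p.2) /\
    H (m ++ root_idem (fC k p.2) ++ inv m).

Definition cellDH k := {p : (word B -> Prop) * cell C k | DH_cell p}.

Definition front_letter k (c : cell C k.+1) : letter B := gpos 0 (fC 1 (front c)).

(* Faces of index > k+1 are junk; clamping them to k+1 keeps [raw_face] total. *)
Definition raw_face k (p : (word B -> Prop) * cell C k.+1) (i : nat) :
    (word B -> Prop) * cell C k :=
  if i == 0 then (coset_shift p.1 [:: front_letter p.2], face p.2 0)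
  else (p.1, face p.2 (minn i k.+1)).

Lemma front_letterE k (c : cell C k.+1) : front_letter c = gpos 0 (front (fC k.+1 c)).
Proof. by rewrite /front_letter (morph_front fC_imm.1). Qed.

Lemma admissible_front k (c : cell C k.+1) m :
  H (m ++ root_idem (fC k.+1 c) ++ inv m) -> admissible (m ++ [:: front_letter c]).
Proof.
move=> h; rewrite /admissible inv_word_cat front_letterE -catA.
exact: (closed_absorbs H_closed (idem_root_idem _) (absorbs_front _) h).
Qed.

Lemma DH_cell_raw_face k p i : DH_cell p -> DH_cell (@raw_face k p i).
Proof.
case: p => S c [m [/= -> [gm [hu hc]]]].
have f_morph := fC_imm.1.
rewrite /raw_face; case: ifP => [_|/negbT i0].
- have gx := admissible_front hc.
  exists (m ++ [:: front_letter c]); split; first by rewrite /= coset_shiftE.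
  split=> //; split.
  + apply/actw_cat; exists (root c); split=> //; apply/actw1.
    by exists (front c); rewrite src_front tgt_front.
  + rewrite /= f_morph // inv_word_cat front_letterE -!catA.
    have := closed_absorbs H_closed (idem_root_idem _) (absorbs_face0 _) hc.
    by rewrite -!catA.
- exists m; do !split=> //=.
  + by rewrite root_face //; lia.
  + rewrite f_morph ?geq_minr //.
    have hi : 0 < minn i k.+1 <= k.+1 by lia.
    exact: (closed_absorbs H_closed (idem_root_idem _) (absorbs_faces _ hi) hc).
Qed.

Definition faceDH k (d : cellDH k.+1) (i : nat) : cellDH k :=
  exist _ (raw_face (proj1_sig d) i) (DH_cell_raw_face i (proj2_sig d)).

Lemma cellDH_eq k (d d' : cellDH k) : proj1_sig d = proj1_sig d' -> d = d'.
Proof.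
case: d d' => p hp [p' hp'] /= e; subst p'.
by rewrite (proof_irrelevance _ hp hp').
Qed.

Lemma coset_triangle k (c : cell C k.+2) m : H (m ++ root_idem (fC k.+2 c) ++ inv m) ->
  coset_shift (coset_shift (coset m) [:: front_letter c]) [:: front_letter (face c 0)] =
  coset_shift (coset m) [:: front_letter (face c 1)].
Proof.
have f_morph := fC_imm.1.
have triangle := absorbs_triangle (fC k.+2 c).
have idem_c := idem_root_idem (fC k.+2 c).
rewrite !front_letterE !f_morph //.
set x12 := gpos 0 _; set x23 := gpos 0 _; set x13 := gpos 0 _ => hc.
have g123 : admissible (m ++ [:: x12; x23]).
  have := closed_absorbs H_closed idem_c (absorbs_prefix (p := [:: x12; x23]) idem_c triangle) hc.
  by rewrite /admissible inv_word_cat -!catA.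
have g13 : admissible (m ++ [:: x13]).
  have := closed_absorbs H_closed idem_c
    (absorbs_prefix (p := [:: x13]) idem_c (absorbs_inv idem_c triangle)) hc.
  by rewrite /admissible inv_word_cat -!catA.
have g12 : admissible (m ++ [:: x12]).
  by apply: (admissible_prefix H_closed (q := [:: x23])); rewrite -catA.
rewrite (coset_shiftE H_closed g12) (coset_shiftE H_closed g13) coset_shiftE -?catA //.
apply: (eq_coset H_closed); rewrite inv_word_cat -!catA.
exact: (closed_absorbs H_closed idem_c triangle hc).
Qed.

Lemma faceDH_face k (c : cellDH k.+2) i j : i < j -> j <= k.+2 ->
  faceDH (faceDH c j) i = faceDH (faceDH c i) j.-1.
Proof.
move=> ij jk; apply: cellDH_eq.
case: c => [[S c] [m [/= -> [_ [_ hc]]]]].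
rewrite /faceDH /raw_face /=.
case: j ij jk => [//|j] ij jk /=; rewrite (minn_idPl jk).
case: i ij => [|i] ij /=.
  case: j ij jk => [|j] _ jk /=; first by rewrite (coset_triangle hc) face_face.
  have jk' : j.+1 <= k.+1 by [].
  by rewrite (minn_idPl jk') /front_letter front_face // face_face.
case: j ij jk => [//|j] ij jk /=.
have [i1 i2 j1] : [/\ i.+1 <= k.+1, i.+1 <= k.+2 & j.+1 <= k.+1] by split; lia.
by rewrite (minn_idPl i1) (minn_idPl i2) (minn_idPl j1) face_face.
Qed.

Definition DH : DeltaComplex := @Build_DeltaComplex cellDH faceDH faceDH_face.

Definition immDH (k : nat) (d : cell DH k) : cell C k := (proj1_sig d).2.
Definition labDH (k : nat) (d : cell DH k) : cell B k := fC k (proj1_sig d).2.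

Lemma immDH_morph : is_morphism immDH.
Proof.
move=> k d i hi; rewrite /immDH /= /raw_face.
by case: ifP => [/eqP -> //|_] /=; rewrite (minn_idPl hi).
Qed.

Lemma labDH_morph : is_morphism labDH.
Proof. by move=> k d i hi; rewrite /labDH -fC_imm.1 // -immDH_morph. Qed.

Lemma rootDH k (d : cell DH k) :
  proj1_sig (root d) = ((proj1_sig d).1, root (proj1_sig d).2).
Proof.
elim: k d => [|k IH] d; first by case: (proj1_sig d).
by rewrite /root /= -/(root _) IH /= /raw_face /= minnn.
Qed.

Lemma faceDH_inj k (d d' : cell DH k.+1) i : (proj1_sig d).2 = (proj1_sig d').2 ->
  face d i = face d' i -> d = d'.
Proof.
move=> e2 /(f_equal (fun x => (proj1_sig x).1)) e1; apply: cellDH_eq; move: e1 e2.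
case: d d' => [[S c] [m [/= -> [gm [_ hc]]]]] [[S' c'] [m' [/= -> [gm' [_ hc']]]]] /=.
rewrite /raw_face /=; case: ifP => [_ + ec|_ /= -> -> //]; subst c' => /=.
have [ga ga'] := (admissible_front hc, admissible_front hc').
rewrite !(coset_shiftE H_closed) // => /(coset_eq_mulV ga'); rewrite inv_word_cat => h.
congr pair; apply: (eq_coset H_closed).
by apply: (closed_drop_idem H_closed (idem_mulV _ [:: front_letter c]) h); rewrite -!catA.
Qed.

Lemma vertDH_inj k (d d' : cell DH k) i :
  (proj1_sig d).2 = (proj1_sig d').2 -> vert d i = vert d' i -> d = d'.
Proof.
elim: k d d' i => [//|k IH] d d' i e2 /=.
by case: ifP => _ hv; apply: (faceDH_inj e2); apply: IH hv; rewrite /= /raw_face /= e2.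
Qed.

Lemma immDH_imm : is_immersion immDH.
Proof. by split=> [|k d d' i _ hv he]; [exact: immDH_morph | exact: vertDH_inj he hv]. Qed.

Lemma labDH_imm : is_immersion labDH.
Proof.
split=> [|k d d' i hi hv he]; first exact: labDH_morph.
apply: (vertDH_inj (i := i) _ hv); apply: (fC_imm.2 k _ _ i hi _ he).
by rewrite -!(morph_vert immDH_morph) hv.
Qed.

Section LiftLetter.
Variables (d : cell DH 0) (m : word B) (c : cell C 0).
Hypotheses (d_def : proj1_sig d = (coset m, c)) (gm : admissible m) (hu : actw fC u m c).

Let lift_spec l (d1 : cell DH 0) := admissible (m ++ [:: l]) /\
  exists c1, act fC c l c1 /\ proj1_sig d1 = (coset (m ++ [:: l]), c1).

Lemma actDH_edge r (d1 : cell DH 0) : act labDH d (gpos 0 r) d1 <-> lift_spec (gpos 0 r) d1.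
Proof.
split.
- move=> [[[S e] [m0 [/= eS [gm0 [hu0 he0]]]]] [he [hs ht]]]; subst S.
  rewrite /labDH /= in he.
  move: (f_equal (@proj1_sig _ _) hs); rewrite /= /raw_face /= d_def => [[e1 ec]].
  have g0x := admissible_front (c := e) he0; rewrite /front_letter he in g0x.
  have [gmx ecl] := admissible_transfer H_closed (coset_eq_mulV gm0 (esym e1)) g0x.
  split=> //; exists (tgt e); split; first by exists e; rewrite -ec.
  by rewrite -ht /= /raw_face /= /front_letter he coset_shiftE ?ecl.
- move=> [gx [c1 [[e [he [hs ht]]] hd1]]].
  have ve : DH_cell (coset m, e).
    have re : root e = c := hs.
    exists m; do 3!split=> //; first by rewrite /= re.
    by move: gx; rewrite /admissible /= he inv_word_cat -!catA.
  exists (exist _ _ ve); split; first by rewrite /labDH /= he.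
  split; apply: cellDH_eq; rewrite /= /raw_face /=; first by rewrite d_def -hs.
  by rewrite hd1 -ht /front_letter he coset_shiftE.
Qed.

Lemma actDH_edge_inv r (d1 : cell DH 0) :
  act labDH d (gneg 0 r) d1 <-> lift_spec (gneg 0 r) d1.
Proof.
split.
- move=> [[[S e] [m0 [/= eS [gm0 [hu0 he0]]]]] [he [hs ht]]]; subst S.
  rewrite /labDH /= in he.
  move: (f_equal (@proj1_sig _ _) ht); rewrite /= /raw_face /= d_def => [[e1 ec]].
  have g0x := admissible_front (c := e) he0.
  rewrite coset_shiftE // in e1; rewrite /front_letter he in g0x e1.
  have [g0xx back] := admissible_mulV H_closed g0x.
  have [gmx ecl] := admissible_transfer H_closed (coset_eq_mulV g0x (esym e1)) g0xx.
  split=> //; exists (src e); split; first by exists e; rewrite -ec.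
  rewrite -hs /= -ecl; congr pair; apply: (eq_coset H_closed).
  by move: back; rewrite !inv_word_cat inv_wordK -!catA.
- move=> [gx [c1 [[e [he [hs ht]]] hd1]]].
  have [gxx back] := admissible_mulV H_closed gx.
  have ve : DH_cell (coset (m ++ [:: gneg 0 r]), e).
    exists (m ++ [:: gneg 0 r]); do 3!split=> //=.
      by apply/actw_cat; exists c; split=> //; apply/actw1; exists e; rewrite hs ht.
    by move: gxx; rewrite /admissible he !inv_word_cat -!catA.
  exists (exist _ _ ve); split; first by rewrite /labDH /= he.
  split; apply: cellDH_eq; rewrite /= /raw_face /=; first by rewrite hd1 -hs.
  rewrite d_def -ht /front_letter he coset_shiftE //; congr pair.
  by apply: (eq_coset H_closed); move: back; rewrite -!catA.
Qed.

Lemma actDH_cell j (r : cell B j.+2) b (d1 : cell DH 0) :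
  act labDH d (cell_letter r b) d1 <-> lift_spec (cell_letter r b) d1.
Proof.
split.
- move=> [-> [[[S e] [m0 [/= eS [gm0 [hu0 he0]]]]] [he hr]]]; subst S.
  rewrite /labDH /= in he.
  move: (f_equal (@proj1_sig _ _) hr); rewrite rootDH /= d_def => [[e1 e2]].
  have g0l : admissible (m0 ++ [:: cell_letter r b]) by apply/(admissible_cell_letter H_closed m0 r b); rewrite -he.
  have [gml ecl] := admissible_transfer H_closed (coset_eq_mulV gm0 (esym e1)) g0l.
  split=> //; exists c; split; first by split=> //; exists e; rewrite he e2.
  by rewrite d_def coset_cell_letter.
- move=> [gl [c1 [[-> [e [he hr]]] hd1]]].
  have -> : d1 = d by apply: cellDH_eq; rewrite hd1 d_def coset_cell_letter.
  have ve : DH_cell (coset m, e).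
    exists m; do 3!split=> //=; first by rewrite hr.
    by rewrite he; apply/(admissible_cell_letter H_closed m r b).
  split=> //; exists (exist _ _ ve); split; first by rewrite /labDH /= he.
  by apply: cellDH_eq; rewrite rootDH d_def hr.
Qed.

Lemma actDH_letter l (d1 : cell DH 0) : act labDH d l d1 <-> lift_spec l d1.
Proof.
case: l => [[[|j] r] b]; last exact: actDH_cell.
by case: b; [exact (actDH_edge_inv r d1) | exact (actDH_edge r d1)].
Qed.

End LiftLetter.

Lemma actDH w : forall (d : cell DH 0) m c, proj1_sig d = (coset m, c) -> admissible m ->
  actw fC u m c -> forall d', actw labDH d w d' <->
  admissible (m ++ w) /\ exists c', actw fC c w c' /\ proj1_sig d' = (coset (m ++ w), c').
Proof.
elim: w => [|l w IH] d m c d_def gm hu d' /=.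
  rewrite cats0; split=> [->|[_ [c' [-> e]]]]; first by split=> //; exists c.
  by apply: cellDH_eq; rewrite e d_def.
split=> [[d1 [/(actDH_letter d_def gm hu) [gl [c1 [a1 hd1]]] h2]] | [g [c' [[c1 [a1 a2]] hd']]]].
- have hu1 : actw fC u (m ++ [:: l]) c1 by apply/actw_cat; exists c; split=> //; apply/actw1.
  have [g2 [c' [a2 hd2]]] := (IH d1 _ _ hd1 gl hu1 d').1 h2.
  by rewrite -catA in g2 hd2; split=> //; exists c'; split=> //; exists c1.
- have gl : admissible (m ++ [:: l]) by apply: (admissible_prefix H_closed (q := w)); rewrite -catA.
  have hu1 : actw fC u (m ++ [:: l]) c1 by apply/actw_cat; exists c; split=> //; apply/actw1.
  pose d1 : cell DH 0 := exist _ (coset (m ++ [:: l]), c1) (ex_intro _ _ (conj erefl (conj gl (conj hu1 gl)))).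
  exists d1; split; first by apply/(actDH_letter d_def gm hu); split=> //; exists c1.
  by apply/(IH d1 _ c1 erefl gl hu1 d'); rewrite -catA; split=> //; exists c'.
Qed.

Hypothesis H_sub : subset_w H (Loop fC u).

Lemma DH_cell_base : DH_cell (coset [::], u).
Proof. by exists [::]; split=> //; split; [|split=> //]; exact: closed_nil H_closed. Qed.

Definition baseDH : cell DH 0 := exist _ (coset [::], u) DH_cell_base.

Lemma Loop_DH w : Loop labDH baseDH w <-> H w.
Proof.
have g0 : admissible [::] := closed_nil H_closed.
rewrite /Loop (actDH w (d := baseDH) (erefl _) g0 (erefl u) baseDH) /=.
split=> [[_ [_ [_ [e _]]]] | hw].
- by have := coset_eq_mulV g0 (esym e); rewrite cats0.
- have gw : admissible w := closed_cat H_closed hw (closed_inv H_closed hw).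
  split=> //; exists u; split; first exact: H_sub.
  by congr pair; apply: (eq_coset H_closed); exact (closed_inv H_closed hw).
Qed.

Lemma DH_connected : connected DH.
Proof.
have g0 : admissible [::] := closed_nil H_closed.
have from_base (d : cell DH 0) : vconn baseDH d.
  case: (proj2_sig d) => m [eS [gm [hu _]]].
  apply: (actw_vconn (w := m)); apply/(actDH m (d := baseDH) (erefl _) g0 (erefl u)).
  split=> //; exists (proj1_sig d).2; split=> //.
  by rewrite /= -eS; case: (proj1_sig d).
by move=> x y; apply: vc_trans (vc_sym (from_base x)) (from_base y).
Qed.

Lemma DH_cover : cover_data fC u H labDH immDH baseDH.
Proof.
split; first exact: DH_connected.
split; first exact: labDH_imm.
split; first exact: immDH_imm.
by do 2!split=> //; exact: Loop_DH.
Qed.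

End Construction.

(** * Conjugate submonoids *)

Section Conjugation.
Variables (B D : DeltaComplex) (fD : forall k, cell D k -> cell B k).
Arguments fD : clear implicits.
Variables (v w : cell D 0) (m : word B).
Hypothesis path : actw fD v m w.

Lemma Loop_conj x : Loop fD w x -> Loop fD v (m ++ x ++ inv_word m).
Proof.
move=> hx; apply/actw_cat; exists w; split=> //.
by apply/actw_cat; exists w; split=> //; apply/actw_inv.
Qed.

Hypothesis fD_imm : is_immersion fD.

Lemma Loop_conjV x : Loop fD v (m ++ x ++ inv_word m) -> Loop fD w x.
Proof.
move=> /actw_cat [a [ha /actw_cat [b [hb /actw_inv hb']]]].
by move: hb; rewrite (actw_functional fD_imm ha path) (actw_functional fD_imm hb' path).
Qed.

End Conjugation.

Lemma Loop_iso (B D E : DeltaComplex) (fD : forall k, cell D k -> cell B k)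
    (fE : forall k, cell E k -> cell B k) (h : forall k, cell D k -> cell E k) :
  is_iso h -> (forall k x, fE k (h k x) = fD k x) ->
  forall v w, Loop fE (h 0 v) w <-> Loop fD v w.
Proof.
move=> [h_morph [g [g_morph [gh hg]]]] h_label v w.
have g_label k y : fD k (g k y) = fE k y by rewrite -h_label hg.
split=> [|hw]; last exact: morph_actw h_morph h_label _ _ _ hw.
by move=> /(morph_actw g_morph g_label); rewrite gh.
Qed.

Section CoverConjugation.
Variables (B C : DeltaComplex) (fC : forall k, cell C k -> cell B k).
Arguments fC : clear implicits.
Variables (u : cell C 0) (H K : word B -> Prop).
Variables (DH : DeltaComplex) (fDH : forall k, cell DH k -> cell B k)
  (fH : forall k, cell DH k -> cell C k) (vH : cell DH 0).
Variables (DK : DeltaComplex) (fDK : forall k, cell DK k -> cell B k)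
  (fK : forall k, cell DK k -> cell C k) (vK : cell DK 0).
Arguments fDH : clear implicits.
Arguments fH : clear implicits.
Arguments fDK : clear implicits.
Arguments fK : clear implicits.
Hypothesis coverH : cover_data fC u H fDH fH vH.
Hypothesis coverK : cover_data fC u K fDK fK vK.

Lemma iso_conjugate (h : forall k, cell DH k -> cell DK k) :
  is_iso h -> (forall k x, fK k (h k x) = fH k x) -> conjugate_in (Loop fC u) H K.
Proof.
have [_ [_ [_ [fH_label [fH_vH LH]]]]] := coverH.
have [DK_conn [fDK_imm [fK_imm [fK_label [fK_vK LK]]]]] := coverK.
move=> h_iso h_imm.
have h_label k x : fDK k (h k x) = fDH k x by rewrite -fK_label h_imm fH_label.
have Lw x : Loop fDK (h 0 vH) x <-> H x by rewrite Loop_iso // LH.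
have [m path] := vconn_actw fDK (DK_conn vK (h 0 vH)).
exists m; split; last split.
- by have := morph_actw fK_imm.1 fK_label path; rewrite fK_vK h_imm fH_vH.
- by move=> x /Lw /(Loop_conj path) /LK.
- have path' : actw fDK (h 0 vH) (inv_word m) vK by apply/actw_inv.
  by move=> x /LK /(Loop_conj path') /Lw; rewrite inv_wordK.
Qed.

Hypothesis B_single : single_vertex B.
Hypothesis fC_imm : is_immersion fC.
Hypothesis H_closed : closed_inv_submonoid H.

Lemma conjugate_iso : conjugate_in (Loop fC u) H K ->
  exists h : forall k, cell DH k -> cell DK k, is_iso h /\ forall k x, fK k (h k x) = fH k x.
Proof.
have [DK_conn [fDK_imm [fK_imm [fK_label [fK_vK LK]]]]] := coverK.
move=> [m [hm [HK KH]]].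
have /LK /actw_cat [w [path _]] := HK _ (closed_nil H_closed).
have fK_w : fK 0 w = u.
  have := morph_actw fK_imm.1 fK_label path; rewrite fK_vK => a.
  exact: (actw_functional fC_imm a hm).
have Lw x : Loop fDK w x <-> H x.
  split=> [hx | /HK /LK /(Loop_conjV path fDK_imm) //].
  (* Closedness of H strips the idempotents m^-1 m off both ends. *)
  have h1 := KH _ ((LK _).1 (Loop_conj path hx)).
  have h2 : H ([::] ++ x ++ inv_word m ++ m).
    by apply: (closed_drop_idem H_closed (idem_Vmul _ m) h1); rewrite -!catA.
  rewrite -[x]cats0; apply: (closed_drop_idem H_closed (idem_Vmul _ m) h2).
  by rewrite cats0.
have coverK' : cover_data fC u H fDK fK w by do !split=> //.
have [h [h_iso [_ [h_imm _]]]] := cover_unique B_single fC_imm coverH coverK'.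
by exists h.
Qed.

End CoverConjugation.

Theorem mainTheorem13 (B : DeltaComplex)
    (HB1 : single_vertex B) (HB2 : finite_dim B) :
  (* (1) *)
  (forall (C D : DeltaComplex) (fC : forall k, cell C k -> cell B k)
          (fD : forall k, cell D k -> cell B k)
          (f : forall k, cell D k -> cell C k),
      connected C -> connected D ->
      is_immersion fC -> is_immersion fD -> is_immersion f ->
      (forall k x, fC k (f k x) = fD k x) ->
      forall v : cell D 0,
        subset_w (Loop fD v) (Loop fC (f 0 v)) /\
        closed_inv_submonoid_of (Loop fC (f 0 v)) (Loop fD v)) /\
  (* (2) *)
  (forall (C : DeltaComplex) (fC : forall k, cell C k -> cell B k),
      connected C -> is_immersion fC ->
      forall (u : cell C 0) (H : word B -> Prop),
        closed_inv_submonoid H -> subset_w H (Loop fC u) ->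
        exists (D : DeltaComplex) (fD : forall k, cell D k -> cell B k)
               (fH : forall k, cell D k -> cell C k) (v : cell D 0),
          cover_data fC u H fD fH v /\
          forall (D' : DeltaComplex) (fD' : forall k, cell D' k -> cell B k)
                 (fH' : forall k, cell D' k -> cell C k) (v' : cell D' 0),
            cover_data fC u H fD' fH' v' ->
            exists h : forall k, cell D k -> cell D' k,
              is_iso h /\ (forall k x, fD' k (h k x) = fD k x) /\
              (forall k x, fH' k (h k x) = fH k x) /\ h 0 v = v') /\
  (* (3) *)
  (forall (C : DeltaComplex) (fC : forall k, cell C k -> cell B k),
      connected C -> is_immersion fC ->
      forall (u : cell C 0) (H K : word B -> Prop),
        closed_inv_submonoid H -> subset_w H (Loop fC u) ->
        closed_inv_submonoid K -> subset_w K (Loop fC u) ->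
        forall (DH : DeltaComplex) (fDH : forall k, cell DH k -> cell B k)
               (fH : forall k, cell DH k -> cell C k) (vH : cell DH 0)
               (DK : DeltaComplex) (fDK : forall k, cell DK k -> cell B k)
               (fK : forall k, cell DK k -> cell C k) (vK : cell DK 0),
          cover_data fC u H fDH fH vH -> cover_data fC u K fDK fK vK ->
          ((exists h : forall k, cell DH k -> cell DK k,
              is_iso h /\ (forall k x, fK k (h k x) = fH k x)) <->
           conjugate_in (Loop fC u) H K)).
Proof.
split; [|split].
- move=> C D fC fD f _ _ _ fD_imm f_imm f_label.
  exact: Loop_closed_inv_submonoid fD_imm f_imm.1 f_label.
- move=> C fC _ fC_imm u H H_closed H_sub.
  have cover := DH_cover fC_imm H_closed H_sub.
  do 4!eexists; split; first exact: cover.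
  by move=> D' fD' fH' v' cover'; exact: cover_unique HB1 fC_imm cover cover'.
- move=> C fC _ fC_imm u H K H_closed _ _ _ DH fDH fH vH DK fDK fK vK coverH coverK.
  split=> [[h [h_iso h_imm]] | ]; first exact: (iso_conjugate coverH coverK h_iso h_imm).
  exact: (conjugate_iso coverH coverK HB1 fC_imm H_closed).
Qed.
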